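(* Let $w_k^A,w_k^B$ be the noise vectors associated with SDQ (see context), under the assumptions that rewards satisfy $|r(s,a,s')|\le1$, $\|Q_0^A\|_\infty,\|Q_0^B\|_\infty\le1$ and $\alpha\in(0,1)$. Then for all $k\ge0$, \[ \mathbb{E}\big[(w_k^A-w_k^B)^T(w_k^A-w_k^B)\big]\le\frac{16}{(1-\gamma)^2}. \]
   Context: Finite MDP with states $\mathcal{S}=\{1,\dots,|\mathcal{S}|\}$, actions $\mathcal{A}=\{1,\dots,|\mathcal{A}|\}$, transitions $P(s'|s,a)$, deterministic reward $r(s,a,s')$ with $|r|\le 1$, discount $\gamma\in(0,1)$. Sampling distribution $d(s,a)>0$ on $\mathcal{S}\times\mathcal{A}$; at iteration $k$, $(s_k,a_k)\sim d$ i.i.d., $s_k'\sim P(\cdot|s_k,a_k)$, $r_{k+1}=r(s_k,a_k,s_k')$. Constant step-size $\alpha\in(0,1)$. SDQ: only entry $(s_k,a_k)$ is updated, $Q_{k+1}^A(s_k,a_k)=Q_k^A(s_k,a_k)+\alpha\{r_{k+1}+\gamma Q_k^A(s_k',\arg\max_aQ_k^B(s_k',a))-Q_k^A(s_k,a_k)\}$ and symmetrically for $B$ with roles of $A,B$ swapped. Vector notation: $Q\in\mathbb{R}^{|\mathcal{S}||\mathcal{A}|}$ stacks $Q(\cdot,1),\dots,Q(\cdot,|\mathcal{A}|)$, so $Q(s,a)=(e_a\otimes e_s)^TQ$. $D$ is the diagonal matrix with entry $d(s,a)$ at position $(s,a)$. $P\in\mathbb{R}^{|\mathcal{S}||\mathcal{A}|\times|\mathcal{S}|}$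 has row $(s,a)$ equal to $P(\cdot|s,a)$. $R(s,a)=\mathbb{E}[r(s,a,s')|s,a]$. For $Q$, $\pi_Q(s)=\arg\max_aQ(s,a)$ (fixed tie-breaking) and $\Pi_Q\in\mathbb{R}^{|\mathcal{S}|\times|\mathcal{S}||\mathcal{A}|}$ has $s$-th row $e_{\pi_Q(s)}^T\otimes e_s^T$. Noise: $w_k^A=(e_{a_k}\otimes e_{s_k})r_{k+1}+\gamma(e_{a_k}\otimes e_{s_k})e_{s_k'}^T\Pi_{Q_k^B}Q_k^A-(e_{a_k}\otimes e_{s_k})(e_{a_k}\otimes e_{s_k})^TQ_k^A-(DR+\gamma DP\Pi_{Q_k^B}Q_k^A-DQ_k^A)$, and $w_k^B$ is the same with $A$ and $B$ swapped. *)

(* Q-functions are represented as functions S -> A -> R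
   (the vector Q in R^{|S||A|} with Q(s,a) = (e_a (x) e_s)^T Q). *)
From mathcomp Require Import all_boot all_order all_algebra.
Set Implicit Arguments. Unset Strict Implicit. Unset Printing Implicit Defensive.
Import Order.TTheory GRing.Theory Num.Theory.
Local Open Scope ring_scope.

Section SDQ.
Variables (R : realFieldType) (S A : finType).

Definition sample := (S * A * S)%type.

(* greedy policy pi_Q(s) = argmax_a Q(s,a), with a fixed selector [am] *)
Definition greedy (am : (A -> R) -> A) (Q : S -> A -> R) (s : S) : A := am (Q s).

Definition sdq_step (gamma alpha : R) (am : (A -> R) -> A)
  (r : S -> A -> S -> R) (QQ : (S -> A -> R) * (S -> A -> R)) (x : sample)
  : (S -> A -> R) * (S -> A -> R) :=
  let '(s, a, s') := x in
  let QA := QQ.1 in let QB := QQ.2 in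
  ((fun s0 a0 => if (s0 == s) && (a0 == a)
                 then QA s a + alpha * (r s a s' + gamma * QA s' (greedy am QB s') - QA s a)
                 else QA s0 a0),
   (fun s0 a0 => if (s0 == s) && (a0 == a)
                 then QB s a + alpha * (r s a s' + gamma * QB s' (greedy am QA s') - QB s a)
                 else QB s0 a0)).

(* (Q_k^A, Q_k^B) after processing the samples xs = [x_0; ...; x_{k-1}] *)
Definition sdq_iter (gamma alpha : R) (am : (A -> R) -> A) (r : S -> A -> S -> R)
  (QA0 QB0 : S -> A -> R) (xs : seq sample) : (S -> A -> R) * (S -> A -> R) :=
  foldl (sdq_step gamma alpha am r) (QA0, QB0) xs.

Definition exp_reward (P : S -> A -> S -> R) (r : S -> A -> S -> R) (s : S) (a : A) : R :=
  \sum_(s' : S) P s a s' * r s a s'.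

(* noise w_k^A (componentwise unfolding of the vector formula), with
   Q1 = Q_k^A (evaluated) and Q2 = Q_k^B (greedy); w_k^B is noise with Q1,Q2 swapped *)
Definition noise (d : S -> A -> R) (P : S -> A -> S -> R) (r : S -> A -> S -> R)
  (gamma : R) (am : (A -> R) -> A) (Q1 Q2 : S -> A -> R) (x : sample) : S -> A -> R :=
  let '(s, a, s') := x in
  fun s0 a0 =>
    (if (s0 == s) && (a0 == a)
     then r s a s' + gamma * Q1 s' (greedy am Q2 s') - Q1 s a else 0)
    - d s0 a0 * (exp_reward P r s0 a0
                 + gamma * (\sum_(s'' : S) P s0 a0 s'' * Q1 s'' (greedy am Q2 s''))
                 - Q1 s0 a0).

Definition sqnorm (v : S -> A -> R) : R := \sum_(s : S) \sum_(a : A) v s a ^+ 2.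

Definition sample_prob (d : S -> A -> R) (P : S -> A -> S -> R) (x : sample) : R :=
  let '(s, a, s') := x in d s a * P s a s'.

Definition expect (d : S -> A -> R) (P : S -> A -> S -> R) (k : nat)
  (f : {ffun 'I_k.+1 -> sample} -> R) : R :=
  \sum_(t : {ffun 'I_k.+1 -> sample}) (\prod_(i < k.+1) sample_prob d P (t i)) * f t.

Definition hist (k : nat) (t : {ffun 'I_k.+1 -> sample}) : seq sample :=
  [seq t (inord i) | i <- iota 0 k].
Definition cur (k : nat) (t : {ffun 'I_k.+1 -> sample}) : sample := t ord_max.

Definition noise_diff_sq (d : S -> A -> R) (P : S -> A -> S -> R) (r : S -> A -> S -> R)
  (gamma alpha : R) (am : (A -> R) -> A) (QA0 QB0 : S -> A -> R) (k : nat)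
  (t : {ffun 'I_k.+1 -> sample}) : R :=
  let QQ := sdq_iter gamma alpha am r QA0 QB0 (hist t) in
  let wA := noise d P r gamma am QQ.1 QQ.2 (cur t) in
  let wB := noise d P r gamma am QQ.2 QQ.1 (cur t) in
  sqnorm (fun s a => wA s a - wB s a).

End SDQ.

(** Both estimators are updated at the same entry with the same reward, so the
    reward cancels in Q^A - Q^B: the updated entry becomes (1 - alpha) times its
    old value plus alpha gamma times the cross greedy gap
    Q^A(s', pi_B(s')) - Q^B(s', pi_A(s')), and the greedy property bounds this
    gap by the sup-norm of Q^A - Q^B.  Hence |Q_k^A - Q_k^B| <= 2 along every
    sample path.  The reward cancels in w^A - w^B as well, which is
    e_(s,a) X - D Z with |X|, |Z| <= 2 (1 + gamma); so its squared norm is at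
    most 2 X^2 + 2 sum d^2 Z^2 <= 16 (1 + gamma)^2 <= 16 / (1 - gamma)^2, on
    every sample path and hence in expectation. *)
From mathcomp Require Import all_boot all_order all_algebra.
From mathcomp Require Import ring lra.
Set Implicit Arguments. Unset Strict Implicit. Unset Printing Implicit Defensive.
Import Order.TTheory GRing.Theory Num.Theory.
Local Open Scope ring_scope.

Section SDQNoiseBound.
Variables (R : realFieldType) (S A : finType).
Implicit Types (Q : S -> A -> R) (D gamma alpha : R).

Lemma norm_convex_le (I : finType) (p f : I -> R) D :
  (forall i, 0 <= p i) -> \sum_i p i = 1 -> (forall i, `|f i| <= D) ->
  `|\sum_i p i * f i| <= D.
Proof.
move=> p_ge0 p_sum1 f_le; apply: le_trans (ler_norm_sum _ _ _) _.
rewrite -[leRHS]mul1r -p_sum1 mulr_suml; apply: ler_sum => i _.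
by rewrite normrM ger0_norm // ler_wpM2l.
Qed.

Lemma norm_scale_subr_le gamma D x y :
  0 <= gamma -> `|x| <= D -> `|y| <= D -> `|gamma * x - y| <= (1 + gamma) * D.
Proof.
move=> gamma_ge0; rewrite !ler_norml => /andP[x1 x2] /andP[y1 y2].
by apply/andP; split; nra.
Qed.

Lemma sqr_le_sqr_of_norm (x C : R) : `|x| <= C -> x ^+ 2 <= C ^+ 2.
Proof.
move=> xC; rewrite -real_normK ?num_real // lerXn2r ?nnegrE //.
exact: le_trans xC.
Qed.

Lemma sqr_1Dr_le_inv_sqr_1Br gamma :
  0 <= gamma < 1 -> (1 + gamma) ^+ 2 <= ((1 - gamma) ^+ 2)^-1.
Proof.
move=> /andP[g0 g1].
rewrite -[leRHS]mul1r ler_pdivlMr ?exprn_gt0 ?subr_gt0 // -exprMn.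
by rewrite exprn_ile1 //; nra.
Qed.

Variables (d : S -> A -> R) (P : S -> A -> S -> R).
Hypotheses (d_gt0 : forall s a, 0 < d s a) (d_sum1 : \sum_s \sum_a d s a = 1).
Hypotheses (P_ge0 : forall s a s', 0 <= P s a s')
           (P_sum1 : forall s a, \sum_s' P s a s' = 1).

Lemma d_le1 s a : d s a <= 1.
Proof.
rewrite -d_sum1 (bigD1 s) //= (bigD1 a) //= -addrA lerDl.
by apply: addr_ge0; apply: sumr_ge0 => *; [exact: ltW | apply: sumr_ge0 => *; exact: ltW].
Qed.

Lemma sum_sample_prob : \sum_(x : sample S A) sample_prob d P x = 1.
Proof.
transitivity (\sum_(sa : S * A) \sum_(s' : S) sample_prob d P (sa, s')).
  by rewrite pair_bigA; apply: eq_bigr => -[[s a] s'].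
rewrite -d_sum1 [RHS]pair_bigA; apply: eq_bigr => -[s a] _ /=.
by rewrite -mulr_sumr P_sum1 mulr1.
Qed.

Lemma expect_le_cst k (f : {ffun 'I_k.+1 -> sample S A} -> R) c :
  (forall t, f t <= c) -> expect d P f <= c.
Proof.
move=> f_le; apply: le_trans (_ : \sum_(t : {ffun 'I_k.+1 -> sample S A})
    (\prod_(i < k.+1) sample_prob d P (t i)) * c <= _).
  apply: ler_sum => t _; apply: ler_wpM2l (f_le t).
  apply: prodr_ge0 => i _; case: (t i) => [[s a] s'].
  exact: mulr_ge0 (ltW (d_gt0 s a)) (P_ge0 s a s').
rewrite -mulr_suml -(bigA_distr_bigA (fun _ => sample_prob d P)) /=.
by rewrite sum_sample_prob prodr_const expr1n mul1r.
Qed.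

Lemma sqr_noise_entry_le (i : bool) (C X Z : R) s a :
  `|X| <= C -> `|Z| <= C ->
  ((if i then 1 else 0) * X - d s a * Z) ^+ 2
    <= 2 * C ^+ 2 * ((if i then 1 else 0) + d s a).
Proof.
move=> /sqr_le_sqr_of_norm X2 /sqr_le_sqr_of_norm Z2.
have d0 := ltW (d_gt0 s a); have d1 := d_le1 s a.
have dZ : (d s a * Z) ^+ 2 <= C ^+ 2 * d s a.
  rewrite exprMn (mulrC (C ^+ 2)).
  apply: le_trans (_ : d s a * Z ^+ 2 <= _); last exact: ler_wpM2l.
  by rewrite ler_wpM2r ?sqr_ge0 // expr2 ler_piMr.
have := sqr_ge0 ((if i then 1 else 0) * X + d s a * Z).
by case: i => /=; rewrite ?mul1r ?mul0r ?add0r; nra.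
Qed.

Variable am : (A -> R) -> A.
Hypothesis am_max : forall (f : A -> R) (a : A), f a <= f (am f).
Variable r : S -> A -> S -> R.

Definition cross_gap Q1 Q2 (s : S) : R :=
  Q1 s (greedy am Q2 s) - Q2 s (greedy am Q1 s).

Lemma norm_cross_gap_le Q1 Q2 D s :
  (forall s a, `|Q1 s a - Q2 s a| <= D) -> `|cross_gap Q1 Q2 s| <= D.
Proof.
move=> QD; rewrite /cross_gap /greedy.
have := am_max (Q1 s) (am (Q2 s)); have := am_max (Q2 s) (am (Q1 s)).
have := QD s (am (Q1 s)); have := QD s (am (Q2 s)).
rewrite !ler_norml => /andP[? ?] /andP[? ?] ? ?.
by apply/andP; split; lra.
Qed.

Lemma sdq_step_diffE gamma alpha QQ s a s' s0 a0 :
  let QQ' := sdq_step gamma alpha am r QQ (s, a, s') in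
  QQ'.1 s0 a0 - QQ'.2 s0 a0 =
  if (s0 == s) && (a0 == a)
  then (1 - alpha) * (QQ.1 s a - QQ.2 s a) + alpha * gamma * cross_gap QQ.1 QQ.2 s'
  else QQ.1 s0 a0 - QQ.2 s0 a0.
Proof. by rewrite /= /cross_gap; case: ifP => _ //; ring. Qed.

Lemma sdq_iter_diff_le gamma alpha D Q1 Q2 xs :
  0 <= gamma <= 1 -> 0 <= alpha <= 1 ->
  (forall s a, `|Q1 s a - Q2 s a| <= D) ->
  forall s a, `|(sdq_iter gamma alpha am r Q1 Q2 xs).1 s a
                - (sdq_iter gamma alpha am r Q1 Q2 xs).2 s a| <= D.
Proof.
move=> /andP[g0 g1] /andP[al0 al1] QD; rewrite /sdq_iter.
have : forall s a, `|(Q1, Q2).1 s a - (Q1, Q2).2 s a| <= D by [].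
elim: xs (Q1, Q2) => [|[[s a] s'] xs IH] QQ QQD //=.
apply: IH => s0 a0; rewrite sdq_step_diffE; case: ifP => _; last exact: QQD.
have := norm_cross_gap_le s' QQD; have := QQD s a.
rewrite !ler_norml => /andP[? ?] /andP[? ?].
have ag : 0 <= alpha * gamma <= alpha by apply/andP; split; nra.
by apply/andP; split; nra.
Qed.

Lemma noise_diffE gamma Q1 Q2 s a s' s0 a0 :
  noise d P r gamma am Q1 Q2 (s, a, s') s0 a0
    - noise d P r gamma am Q2 Q1 (s, a, s') s0 a0 =
  (if (s0 == s) && (a0 == a) then 1 else 0)
    * (gamma * cross_gap Q1 Q2 s' - (Q1 s a - Q2 s a))
  - d s0 a0 * (gamma * \sum_s'' P s0 a0 s'' * cross_gap Q1 Q2 s''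
               - (Q1 s0 a0 - Q2 s0 a0)).
Proof.
rewrite /noise /cross_gap.
under [in RHS]eq_bigr do rewrite mulrBr.
by rewrite sumrB; case: ifP => _; ring.
Qed.

Lemma sum_indicator (s : S) (a : A) :
  \sum_(s0 : S) \sum_(a0 : A) (if (s0 == s) && (a0 == a) then 1 else 0) = 1 :> R.
Proof.
rewrite (bigD1 s) //= eqxx /= -big_mkcond big_pred1_eq big1 ?addr0 // => s0 /negbTE s0s.
by rewrite big1 // => a0 _; rewrite s0s.
Qed.

Lemma sqnorm_noise_diff_le gamma D Q1 Q2 x :
  0 <= gamma -> (forall s a, `|Q1 s a - Q2 s a| <= D) ->
  sqnorm (fun s a => noise d P r gamma am Q1 Q2 x s a - noise d P r gamma am Q2 Q1 x s a)
    <= 4 * ((1 + gamma) * D) ^+ 2.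
Proof.
case: x => [[s a] s'] gamma_ge0 QD; set C := (1 + gamma) * D.
pose ind s0 a0 : R := if (s0 == s) && (a0 == a) then 1 else 0.
apply: le_trans (_ : \sum_s0 \sum_a0 2 * C ^+ 2 * (ind s0 a0 + d s0 a0) <= _).
  apply: ler_sum => s0 _; apply: ler_sum => a0 _; rewrite noise_diffE.
  apply: sqr_noise_entry_le; apply: norm_scale_subr_le => //.
  - exact: norm_cross_gap_le.
  - by apply: norm_convex_le => // s''; apply: norm_cross_gap_le.
under eq_bigr do rewrite -mulr_sumr big_split /=.
by rewrite -mulr_sumr big_split /= sum_indicator d_sum1; lra.
Qed.

End SDQNoiseBound.

Theorem lemma6 (R : realFieldType) (S A : finType)
  (d : S -> A -> R) (P : S -> A -> S -> R) (r : S -> A -> S -> R)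
  (gamma alpha : R) (am : (A -> R) -> A) (QA0 QB0 : S -> A -> R) :
  (forall s a, 0 < d s a) ->
  \sum_(s : S) \sum_(a : A) d s a = 1 ->
  (forall s a s', 0 <= P s a s') ->
  (forall s a, \sum_(s' : S) P s a s' = 1) ->
  (forall s a s', `|r s a s'| <= 1) ->
  0 < gamma < 1 ->
  0 < alpha < 1 ->
  (forall (f : A -> R) (a : A), f a <= f (am f)) ->
  (forall s a, `|QA0 s a| <= 1) ->
  (forall s a, `|QB0 s a| <= 1) ->
  forall k : nat,
    expect d P (noise_diff_sq d P r gamma alpha am QA0 QB0 (k:=k))
    <= 16 / (1 - gamma) ^+ 2.
Proof.
move=> d_gt0 d_sum1 P_ge0 P_sum1 _ /andP[g0 g1] /andP[al0 al1] am_max QA0_le QB0_le k.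
apply: expect_le_cst => // t.
have QD0 s a : `|QA0 s a - QB0 s a| <= 2.
  by apply: le_trans (ler_normB _ _) _; apply: lerD.
have gamma01 : 0 <= gamma <= 1 by rewrite !ltW.
have alpha01 : 0 <= alpha <= 1 by rewrite !ltW.
have QD := sdq_iter_diff_le am_max r (hist t) gamma01 alpha01 QD0.
apply: le_trans (sqnorm_noise_diff_le d_gt0 d_sum1 P_ge0 P_sum1 am_max r (cur t) (ltW g0) QD) _.
have gamma_lt1 : 0 <= gamma < 1 by rewrite ltW.
have := sqr_1Dr_le_inv_sqr_1Br gamma_lt1; lra.
Qed.
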